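(* For every real number $x$, \[ \arctan(x)=-2\sum_{m=1}^{\infty}\sum_{n=1}^{2m-1}\frac{(-1)^{n}}{(2m-1)\left(1+x^{2}/4\right)^{2m-1}}\left(\frac{x}{2}\right)^{2(2m-n)-1}\binom{2m-1}{2n-1}. \] *)

From Stdlib Require Export Reals.
Open Scope R_scope.

(* Binomial coefficient on naturals via Pascal's rule; binom n k = 0 for k > n,
   as in the usual combinatorial convention. (Stdlib's real-valued [C n k] uses
   truncated subtraction and is NOT zero for k > n, so we do not use it.) *)
Fixpoint binom (n k : nat) : nat :=
  match n, k with
  | _, O => 1%nat
  | O, S _ => 0%nat
  | S n', S k' => (binom n' k' + binom n' (S k'))%nat
  end.

Definition atan_term (x : R) (m n : nat) : R :=
  (-1) ^ n / (INR (2 * m - 1) * (1 + x ^ 2 / 4) ^ (2 * m - 1))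
  * (x / 2) ^ (2 * (2 * m - n) - 1)
  * INR (binom (2 * m - 1) (2 * n - 1)).

(* Inner finite sum over n = 1 .. 2m-1 (for m >= 1; sum_f_R0 f N has N+1 terms). *)
Definition atan_inner (x : R) (m : nat) : R :=
  sum_f_R0 (fun j => atan_term x m (S j)) (2 * m - 2).

(* Put y = x/2 and w = y (y + i) / (1 + y^2) = y / (y - i), so |w| < 1.  By the
   binomial theorem the m-th inner sum equals -Im (w^(2m-1)) / (2m-1), hence the
   series is -Im (artanh w); as (1 + w) / (1 - w) = 1 + i x, this is -atan(x)/2.
   For |w| < 1, Im (artanh w) = atan (2 Im w / (1 - |w|^2)) / 2 is obtained by
   following t |-> t w on [0, 1]: the t-derivative of the n-th partial sum is a
   truncated geometric series, within |w|^(2n+2) / (1 - |w|^2) of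
   Im (w / (1 - t^2 w^2)), the t-derivative of the closed form. *)

From Stdlib Require Import Reals Lra Lia.
From Coquelicot Require Import Coquelicot.
Open Scope R_scope.

Lemma binom_eq0 n k : (n < k)%nat -> binom n k = 0%nat.
Proof.
  revert k; induction n; intros k Hk; destruct k; simpl; try lia; auto.
  rewrite !IHn; lia.
Qed.

Lemma binom_n0 n : binom n 0 = 1%nat.
Proof. now destruct n. Qed.

Lemma sum_f_R0_shift f n :
  sum_f_R0 f (S n) = f 0%nat + sum_f_R0 (fun j => f (S j)) n.
Proof. exact (decomp_sum f (S n) (Nat.lt_0_succ n)). Qed.

Lemma pow_sub_succ (y : R) n k : (k < n)%nat -> y ^ (n - k) = y ^ (n - S k) * y.
Proof.
  intros Hk; replace (n - k)%nat with (S (n - S k)) by lia; simpl; ring.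
Qed.

Lemma sum_f_R0_extend f n : f (S n) = 0 -> sum_f_R0 f n = sum_f_R0 f (S n).
Proof. intros Hf; rewrite tech5, Hf; ring. Qed.

Section BinomialExpansion.

Variable y : R.

(* Real and imaginary parts of [(y + i)^n]; where the exponent of [y] truncates,
   the binomial coefficient is already 0. *)
Definition cpow_re_sum n :=
  sum_f_R0 (fun j => (-1) ^ j * INR (binom n (2 * j)) * y ^ (n - 2 * j)) n.
Definition cpow_im_sum n :=
  sum_f_R0 (fun j => (-1) ^ j * INR (binom n (2 * j + 1)) * y ^ (n - 2 * j - 1)) n.

Lemma cpow_im_sum_S n : cpow_im_sum (S n) = cpow_re_sum n + y * cpow_im_sum n.
Proof.
  unfold cpow_im_sum, cpow_re_sum.
  rewrite <- sum_f_R0_extend by (rewrite (binom_eq0 (S n) (2 * S n + 1)) by lia; simpl; ring).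
  rewrite scal_sum, <- sum_plus.
  apply sum_eq; intros j Hj.
  replace (2 * j + 1)%nat with (S (2 * j)) by lia; cbn [binom]; rewrite plus_INR.
  replace (S n - 2 * j - 1)%nat with (n - 2 * j)%nat by lia.
  destruct (Nat.le_gt_cases (S (2 * j)) n).
  - rewrite (pow_sub_succ y n (2 * j)) by lia.
    replace (n - 2 * j - 1)%nat with (n - S (2 * j))%nat by lia; ring.
  - rewrite (binom_eq0 n (S (2 * j))) by lia; simpl INR; ring.
Qed.

Lemma cpow_re_sum_S n : cpow_re_sum (S n) = y * cpow_re_sum n - cpow_im_sum n.
Proof.
  unfold cpow_re_sum, cpow_im_sum.
  rewrite (sum_f_R0_extend (fun j => (-1) ^ j * INR (binom n (2 * j)) * y ^ (n - 2 * j)) n)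
    by (rewrite (binom_eq0 n (2 * S n)) by lia; simpl; ring).
  rewrite !sum_f_R0_shift, Rmult_plus_distr_l, scal_sum.
  replace (sum_f_R0 (fun j => (-1) ^ S j * INR (binom (S n) (2 * S j)) * _) n) with
    (sum_f_R0 (fun j => (-1) ^ S j * INR (binom n (2 * S j)) * y ^ (n - 2 * S j) * y) n
     - sum_f_R0 (fun j => (-1) ^ j * INR (binom n (2 * j + 1)) * y ^ (n - 2 * j - 1)) n).
  - rewrite Nat.mul_0_r, !Nat.sub_0_r, !binom_n0; simpl; ring.
  - rewrite <- minus_sum; apply sum_eq; intros j Hj.
    replace (2 * S j)%nat with (S (S (2 * j))) by lia.
    replace (2 * j + 1)%nat with (S (2 * j)) by lia.
    cbn [binom]; rewrite plus_INR.
    replace (S n - S (S (2 * j)))%nat with (n - S (2 * j))%nat by lia.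
    replace (n - 2 * j - 1)%nat with (n - S (2 * j))%nat by lia.
    destruct (Nat.le_gt_cases (S (S (2 * j))) n).
    + rewrite (pow_sub_succ y n (S (2 * j))) by lia; simpl pow; ring.
    + rewrite (binom_eq0 n (S (S (2 * j)))) by lia; simpl; ring.
Qed.

Lemma Cpow_binomial n : Cpow (y, 1) n = (cpow_re_sum n, cpow_im_sum n).
Proof.
  induction n as [|n IH].
  - unfold cpow_re_sum, cpow_im_sum; simpl; unfold RtoC; f_equal; ring.
  - rewrite Cpow_S, IH, cpow_re_sum_S, cpow_im_sum_S; unfold Cmult; simpl; f_equal; ring.
Qed.

End BinomialExpansion.

Lemma derivable_pt_lim_odd_monomial (k : nat) (c t : R) :
  derivable_pt_lim (fun t => t ^ (2 * k + 1) * c / INR (2 * k + 1)) t (t ^ (2 * k) * c).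
Proof.
  replace (2 * k + 1)%nat with (S (2 * k)) by lia; generalize (2 * k)%nat; intros m.
  apply is_derive_Reals; auto_derive; auto.
  change (match m with 0%nat => 1 | S _ => INR m + 1 end) with (INR (S m)).
  field; apply not_0_INR; lia.
Qed.

Lemma sq_le1 t : Rabs t <= 1 -> t ^ 2 <= 1.
Proof. intros Ht; rewrite <- pow2_abs; pose proof (Rabs_pos t); nra. Qed.

Section ImArtanh.

Variable w : C.
Hypothesis w_lt1 : Cmod w < 1.

Let r2 := Cmod w ^ 2.
Let z t := (RtoC (t ^ 2) * w ^ 2)%C.

Definition artanh_Im_sum n t :=
  sum_f_R0 (fun k => t ^ (2 * k + 1) * Im (w ^ (2 * k + 1)) / INR (2 * k + 1)) n.
Definition artanh_Im_sum' n t :=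
  sum_f_R0 (fun k => t ^ (2 * k) * Im (w ^ (2 * k + 1))) n.

(* [Im (artanh (t w))] in closed form. *)
Definition artanh_Im t := / 2 * atan (2 * t * Im w / (1 - t ^ 2 * r2)).

Lemma Cmod_sq_bounds : 0 <= r2 < 1.
Proof. unfold r2; pose proof (Cmod_ge_0 w); split; nra. Qed.

Lemma one_minus_scaled_Cmod_sq_pos t : Rabs t <= 1 -> 0 < 1 - t ^ 2 * r2.
Proof.
  intros Ht; pose proof (sq_le1 t Ht); pose proof (pow2_ge_0 t); pose proof Cmod_sq_bounds; nra.
Qed.

Lemma Cmod_scaled_sq_le t : Rabs t <= 1 -> Cmod (z t) <= r2.
Proof.
  intros Ht; unfold z, r2.
  rewrite Cmod_mult, Cmod_R, Cmod_pow, Rabs_pos_eq by apply pow2_ge_0.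
  pose proof (sq_le1 t Ht); pose proof (pow2_ge_0 (Cmod w)); nra.
Qed.

Lemma Cmod_one_minus_scaled_sq_ge t : Rabs t <= 1 -> 1 - r2 <= Cmod (1 - z t)%C.
Proof.
  intros Ht; pose proof (Cmod_scaled_sq_le t Ht).
  pose proof (Cmod_triangle (1 - z t)%C (z t)) as Htri.
  replace (1 - z t + z t)%C with (RtoC 1) in Htri by ring; rewrite Cmod_1 in Htri; lra.
Qed.

Lemma one_minus_scaled_sq_neq0 t : Rabs t <= 1 -> (1 - z t)%C <> RtoC 0.
Proof.
  intros Ht E; pose proof (Cmod_one_minus_scaled_sq_ge t Ht); pose proof Cmod_sq_bounds.
  rewrite E, Cmod_0 in *; lra.
Qed.

Lemma derivable_pt_lim_artanh_Im_sum n t :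
  derivable_pt_lim (artanh_Im_sum n) t (artanh_Im_sum' n t).
Proof.
  induction n as [|n IH]; unfold artanh_Im_sum, artanh_Im_sum'; cbn [sum_f_R0].
  - apply derivable_pt_lim_odd_monomial.
  - apply derivable_pt_lim_plus; [apply IH | apply derivable_pt_lim_odd_monomial].
Qed.

Lemma artanh_Im_sum'_geometric n t : Rabs t <= 1 ->
  artanh_Im_sum' n t = Im (w * (1 - z t ^ S n) / (1 - z t))%C.
Proof.
  intros Ht; pose proof (one_minus_scaled_sq_neq0 t Ht).
  assert (Hk : forall k, t ^ (2 * k) * Im (w ^ (2 * k + 1)) = Im (w * z t ^ k)%C).
  { intros k; unfold z.
    rewrite Cpow_mult_l, <- RtoC_pow, <- pow_mult, <- Cpow_mult_r, Nat.add_1_r, Cpow_S.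
    rewrite <- im_scal_l; f_equal; ring. }
  induction n as [|n IH]; unfold artanh_Im_sum' in *; cbn [sum_f_R0].
  - rewrite Hk; f_equal; simpl; field; auto.
  - rewrite IH, Hk, <- im_plus; f_equal; rewrite (Cpow_S _ (S n)); field; auto.
Qed.

Lemma Im_div_one_minus_scaled_sq t : Rabs t <= 1 ->
  Im (w / (1 - z t))%C
  = Im w * (1 + t ^ 2 * r2) / ((1 - t ^ 2 * r2) ^ 2 + 4 * t ^ 2 * Im w ^ 2).
Proof.
  intros Ht; pose proof (one_minus_scaled_Cmod_sq_pos t Ht) as Hpos.
  unfold z, r2 in *; rewrite Cmod2_alt in *; destruct w as [a c].
  unfold Cdiv, Cminus, Cmult, Cinv, Copp, Cplus, RtoC; simpl in *.
  assert (HD : 0 < (1 - t * (t * 1) * (a * (a * 1) + c * (c * 1))) ^ 2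
                   + 4 * (t * (t * 1)) * (c * (c * 1))).
  { pose proof (pow2_ge_0 t); pose proof (pow2_ge_0 c); simpl in *; nra. }
  field; apply Rgt_not_eq; eapply Rlt_le_trans; [exact HD | right; ring].
Qed.

Lemma derivable_pt_lim_artanh_Im t : Rabs t <= 1 ->
  derivable_pt_lim artanh_Im t (Im (w / (1 - z t))%C).
Proof.
  intros Ht; rewrite Im_div_one_minus_scaled_sq by exact Ht.
  pose proof (one_minus_scaled_Cmod_sq_pos t Ht) as Hpos.
  set (u t := 2 * t * Im w / (1 - t ^ 2 * r2)).
  assert (Hu : derivable_pt_lim u t (2 * Im w * (1 + t ^ 2 * r2) / (1 - t ^ 2 * r2) ^ 2)).
  { apply is_derive_Reals; unfold u; auto_derive; simpl in *; [lra | field; lra]. }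
  replace (Im w * (1 + t ^ 2 * r2) / ((1 - t ^ 2 * r2) ^ 2 + 4 * t ^ 2 * Im w ^ 2))
    with (/ 2 * (/ (1 + u t ^ 2) * (2 * Im w * (1 + t ^ 2 * r2) / (1 - t ^ 2 * r2) ^ 2))).
  - apply (derivable_pt_lim_scal (comp atan u)), (derivable_pt_lim_comp u atan);
      [exact Hu | apply derivable_pt_lim_atan].
  - unfold u; pose proof (pow2_ge_0 t); pose proof (pow2_ge_0 (Im w)).
    assert (0 < (1 - t ^ 2 * r2) ^ 2) by (apply pow_lt; lra).
    field; split; [nra | lra].
Qed.

Lemma artanh_Im_sum'_error n t : Rabs t <= 1 ->
  Rabs (artanh_Im_sum' n t - Im (w / (1 - z t))%C) <= r2 ^ S n / (1 - r2).
Proof.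
  intros Ht; pose proof (one_minus_scaled_sq_neq0 t Ht) as Hz.
  rewrite artanh_Im_sum'_geometric by exact Ht.
  replace (Im (w * (1 - z t ^ S n) / (1 - z t))%C - Im (w / (1 - z t))%C)
    with (- Im (w * z t ^ S n / (1 - z t))%C)
    by (unfold Rminus; rewrite <- !im_opp, <- im_plus; f_equal; field; exact Hz).
  rewrite Rabs_Ropp; eapply Rle_trans; [eapply Rle_trans; [apply Rmax_r | apply Rmax_Cmod] |].
  rewrite Cmod_div, Cmod_mult, Cmod_pow by exact Hz.
  pose proof (Cmod_ge_0 w); pose proof (Cmod_ge_0 (z t)); pose proof Cmod_sq_bounds.
  pose proof (Cmod_scaled_sq_le t Ht); pose proof (Cmod_one_minus_scaled_sq_ge t Ht).
  apply Rmult_le_compat.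
  - apply Rmult_le_pos; [lra | apply pow_le; lra].
  - left; apply Rinv_0_lt_compat; lra.
  - rewrite <- (Rmult_1_l (r2 ^ S n)); apply Rmult_le_compat; try lra.
    + apply pow_le; lra.
    + apply pow_incr; lra.
  - apply Rinv_le_contravar; lra.
Qed.

Lemma artanh_Im_sum_at0 n : artanh_Im_sum n 0 = 0.
Proof.
  induction n as [|n IH]; unfold artanh_Im_sum in *; cbn [sum_f_R0];
    rewrite ?IH, pow_i by lia; unfold Rdiv; ring.
Qed.

Lemma artanh_Im_at0 : artanh_Im 0 = 0.
Proof.
  unfold artanh_Im; replace (2 * 0 * Im w / (1 - 0 ^ 2 * r2)) with 0 by (unfold Rdiv; ring).
  rewrite atan_0; ring.
Qed.

Lemma artanh_Im_sum_error n : Rabs (artanh_Im_sum n 1 - artanh_Im 1) <= r2 ^ S n / (1 - r2).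
Proof.
  pose proof (bounded_variation (fun t => artanh_Im_sum n t - artanh_Im t)
    (fun t => artanh_Im_sum' n t - Im (w / (1 - z t))%C) (r2 ^ S n / (1 - r2)) 0 1) as Hvar.
  cbv beta in Hvar.
  rewrite artanh_Im_sum_at0, artanh_Im_at0, !Rminus_0_r, Rabs_R1, Rmult_1_r in Hvar.
  apply Hvar; intros t Ht; rewrite Rminus_0_r in Ht; split.
  - apply is_derive_Reals, derivable_pt_lim_minus;
      [apply derivable_pt_lim_artanh_Im_sum | apply derivable_pt_lim_artanh_Im, Ht].
  - apply artanh_Im_sum'_error, Ht.
Qed.

Lemma is_series_Im_odd_powers :
  is_series (fun k => Im (w ^ (2 * k + 1))%C / INR (2 * k + 1))
    (/ 2 * atan (2 * Im w / (1 - Cmod w ^ 2))).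
Proof.
  pose proof Cmod_sq_bounds.
  apply is_series_Reals; intros eps Heps.
  destruct (pow_lt_1_zero r2 ltac:(rewrite Rabs_pos_eq; lra) (eps * (1 - r2)))
    as [N HN]; [apply Rmult_lt_0_compat; lra |].
  exists N; intros n Hn; unfold R_dist.
  replace (sum_f_R0 _ n) with (artanh_Im_sum n 1)
    by (apply sum_eq; intros k _; rewrite pow1, Rmult_1_l; reflexivity).
  replace (/ 2 * atan _) with (artanh_Im 1)
    by (unfold artanh_Im; rewrite pow1, Rmult_1_l, Rmult_1_r; reflexivity).
  eapply Rle_lt_trans; [apply artanh_Im_sum_error |].
  specialize (HN (S n) ltac:(lia)); rewrite Rabs_pos_eq in HN by (apply pow_le; lra).
  apply Rlt_div_l; lra.
Qed.

End ImArtanh.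

Lemma atan_inner_cpow_im_sum x k :
  atan_inner x (S k)
  = - ((x / 2 / (1 + (x / 2) ^ 2)) ^ (2 * k + 1) * cpow_im_sum (x / 2) (2 * k + 1))
    / INR (2 * k + 1).
Proof.
  set (y := x / 2); set (s := 1 + y ^ 2).
  assert (Hs : 0 < s) by (unfold s; pose proof (pow2_ge_0 y); lra).
  assert (HN : INR (2 * k + 1) <> 0) by (apply not_0_INR; lia).
  unfold atan_inner, cpow_im_sum.
  replace (2 * S k - 2)%nat with (2 * k)%nat by lia.
  replace (sum_f_R0 _ (2 * k + 1)) with
    (sum_f_R0 (fun j => (-1) ^ j * INR (binom (2 * k + 1) (2 * j + 1))
                        * y ^ (2 * k + 1 - 2 * j - 1)) (2 * k))
    by (rewrite Nat.add_1_r; apply sum_f_R0_extend;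
        rewrite (binom_eq0 (S (2 * k)) (2 * S (2 * k) + 1)) by lia; simpl; ring).
  transitivity (sum_f_R0 (fun j => (-1) ^ j * INR (binom (2 * k + 1) (2 * j + 1))
      * y ^ (2 * k + 1 - 2 * j - 1) * (- (y / s) ^ (2 * k + 1) / INR (2 * k + 1))) (2 * k));
    [| rewrite <- scal_sum; field; exact HN].
  apply sum_eq; intros j Hj; unfold atan_term.
  replace (2 * S k - 1)%nat with (2 * k + 1)%nat by lia.
  replace (2 * S j - 1)%nat with (2 * j + 1)%nat by lia.
  replace (1 + x ^ 2 / 4) with s by (unfold s, y; field).
  fold y.
  destruct (Nat.le_gt_cases j k).
  - replace (2 * (2 * S k - S j) - 1)%nat with (2 * k + 1 + (2 * k + 1 - 2 * j - 1))%nat by lia.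
    rewrite (pow_add y); unfold Rdiv; rewrite Rpow_mult_distr, pow_inv; simpl pow at 1.
    field; split; [exact HN | apply pow_nonzero; lra].
  - rewrite (binom_eq0 (2 * k + 1) (2 * j + 1)) by lia; simpl; ring.
Qed.

Definition atan_point (x : R) : C := Cmult (RtoC (x / 2 / (1 + (x / 2) ^ 2))) (x / 2, 1).

Lemma atan_inner_Im x k :
  atan_inner x (S k) = - (Im (atan_point x ^ (2 * k + 1))%C / INR (2 * k + 1)).
Proof.
  rewrite atan_inner_cpow_im_sum; unfold atan_point.
  rewrite Cpow_mult_l, <- RtoC_pow, Cpow_binomial, im_scal_l; cbn [Im snd].
  unfold Rdiv; ring.
Qed.

Lemma one_plus_half_sq_pos x : 0 < 1 + (x / 2) ^ 2.
Proof. pose proof (pow2_ge_0 (x / 2)); lra. Qed.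

Lemma Im_atan_point x : Im (atan_point x) = x / 2 / (1 + (x / 2) ^ 2).
Proof. pose proof (one_plus_half_sq_pos x); unfold atan_point; simpl; field; lra. Qed.

Lemma Cmod_atan_point_sq x : Cmod (atan_point x) ^ 2 = (x / 2) ^ 2 / (1 + (x / 2) ^ 2).
Proof.
  pose proof (one_plus_half_sq_pos x); rewrite Cmod2_alt; unfold atan_point; simpl; field; lra.
Qed.

Lemma Cmod_atan_point_lt1 x : Cmod (atan_point x) < 1.
Proof.
  pose proof (one_plus_half_sq_pos x); pose proof (Cmod_ge_0 (atan_point x)).
  assert (Cmod (atan_point x) ^ 2 < 1)
    by (rewrite Cmod_atan_point_sq; apply Rlt_div_l; lra).
  nra.
Qed.

Lemma atan_point_atan_arg x :
  2 * Im (atan_point x) / (1 - Cmod (atan_point x) ^ 2) = x.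
Proof.
  pose proof (one_plus_half_sq_pos x).
  rewrite Im_atan_point, Cmod_atan_point_sq; field; lra.
Qed.

Theorem mainTheorem2 : forall x : R,
  exists l : R, infinite_sum (fun k : nat => atan_inner x (S k)) l /\ atan x = -2 * l.
Proof.
  intros x.
  pose proof (is_series_opp _ _ (is_series_Im_odd_powers _ (Cmod_atan_point_lt1 x))) as Hser.
  rewrite atan_point_atan_arg in Hser.
  exists (- (/ 2 * atan x)); split; [apply is_series_Reals | field].
  refine (is_series_ext _ _ _ _ Hser); intros k; symmetry; apply atan_inner_Im.
Qed.
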